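(* Consider a restless bandit and a set system $(N^{\{0,1\}},\mathcal F)$ as in the context, and suppose the bandit is PCL-indexable relative to the activity measure $b^u$ and $\mathcal F$-policies, with index vector $(\nu_j)_{j\in N^{\{0,1\}}}$ produced by the adaptive-greedy algorithm on input $\widehat{\mathbf h}^0_{N^{\{0,1\}}}$. Then the $\nu$-charge problem is indexable relative to $\mathcal F$-policies, and the dynamic allocation index of each controllable state $j\in N^{\{0,1\}}$ is $\nu_j$; that is, for every $\nu\in\mathbb R$, $S(\nu)=\{j\in N^{\{0,1\}}:\nu\le\nu_j\}\in\mathcal F$.
   Context: Restless bandit: finite state space $N=N^{\{0,1\}}\cup N^{\{1\}}$ (disjoint; controllable and uncontrollable states); actions $a\in\{0,1\}$ (passive/active); one-period costs $h^a_i$, transition probabilities $p^a_{ij}$ with $p^1_{ij}=p^0_{ij}$ for $i\in N^{\{1\}}$; discount factor $\beta\in(0,1)$; activity weights $\theta^1_j>0$. Stationary policies $u:N\to[0,1]$ ($u(i)$ = probability of the active action) with $u(i)=1$ on $N^{\{1\}}$. With $X(t)$ the state and $a(t)$ the action at period $t$: $v^u_i=E^u_i[\sum_{t\ge0}h^{a(t)}_{X(t)}\beta^t]$, $b^u_i=E^u_i[\sum_{t\ge0}\theta^1_{X(t)}a(t)\beta^t]$. For $S\subseteq N^{\{0,1\}}$ the $S$-active policy is active on $S\cup N^{\{1\}}$ and passive elsewhere; $v^S_i,b^S_i$ its measures. The $\nu$-charge problem: $v_i(\nu)=\min_u\{v^u_i+\nu b^u_i\}$; $S(\nu)$ denotes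 the set of $j\in N^{\{0,1\}}$ where the active action attains the minimum in the dynamic programming equation $v_j(\nu)=\min_{a}\{h^a_j+\nu\theta^1_j a+\beta\sum_k p^a_{jk}v_k(\nu)\}$. Marginal workloads: $w^S_i=\theta^1_i 1\{i\in N^{\{0,1\}}\}+\beta\sum_{j}(p^1_{ij}-p^0_{ij})b^S_j$. Normalized passive-cost vector: $\widehat{\mathbf h}^0=\mathbf h^0-(\mathbf I-\beta\mathbf P^0)(\mathbf I-\beta\mathbf P^1)^{-1}\mathbf h^1$. Set system: $\mathcal F\subseteq 2^{N^{\{0,1\}}}$ with $\emptyset\in\mathcal F$; every nonempty $S\in\mathcal F$ has nonempty inner boundary $\partial^-S=\{j\in S:S\setminus\{j\}\in\mathcal F\}$; every $S\in\mathcal F$, $S\ne N^{\{0,1\}}$, has some $j\notin S$ with $S\cup\{j\}\in\mathcal F$. An $\mathcal F$-policy is an $S$-active policy with $S\in\mathcal F$. Indexability relative to $\mathcal F$-policies: as $\nu$ increases from $-\infty$ to $+\infty$, $S(\nu)$ decreases monotonically from $N^{\{0,1\}}$ to $\emptyset$, with $S(\nu)\in\mathcal F$ for all $\nu$; the dynamic allocation index of $j$ is the critical charge $\nu_j$ with $S(\nu)=\{j:\nu\le\nu_j\}$. Adaptive-greedy algorithm on input $\mathbf c=(c_j)_{j\in N^{\{0,1\}}}$, with $n=|N^{\{0,1\}}|$: set $S_1=N^{\{0,1\}}$, $y^{S_1}=\min\{c_j/w^{S_1}_j: j\in\partial^-S_1\}$, $\pi_1$ a minimizer, $\nu_{\pi_1}=y^{S_1}$;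 for $k=2,\dots,n$: $S_k=S_{k-1}\setminus\{\pi_{k-1}\}$, $y^{S_k}=\min\{(c_j-\sum_{l=1}^{k-1}y^{S_l}w^{S_l}_j)/w^{S_k}_j: j\in\partial^-S_k\}$, $\pi_k$ a minimizer, $\nu_{\pi_k}=\nu_{\pi_{k-1}}+y^{S_k}$. PCL-indexability: (i) $w^S_j>0$ for all $S\in\mathcal F$, $j\in N^{\{0,1\}}$; (ii) the algorithm on input $\widehat{\mathbf h}^0_{N^{\{0,1\}}}=(\widehat h^0_j)_{j\in N^{\{0,1\}}}$ yields $\nu_{\pi_1}\le\cdots\le\nu_{\pi_n}$. *)

From mathcomp Require Import classical_sets reals.
From mathcomp Require Import all_boot all_order all_algebra.
Set Implicit Arguments. Unset Strict Implicit. Unset Printing Implicit Defensive.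
Import Order.TTheory GRing.Theory Num.Theory.
Local Open Scope ring_scope.

(* States are 'I_N.  ctrl j  <=> j \in N^{0,1} (controllable);
   ~~ ctrl j <=> j \in N^{1} (uncontrollable). *)

Section Bandit.
Variables (R : realType) (N : nat).
Variables (ctrl : pred 'I_N) (P0 P1 : 'M[R]_N) (h0 h1 : 'cV[R]_N)
          (beta : R) (th : 'I_N -> R).

Definition stochastic (P : 'M[R]_N) :=
  (forall i j, 0 <= P i j) /\ (forall i, \sum_j P i j = 1).

(* stationary (randomized) policies: u i = prob. of the active action *)
Definition admissible (u : 'I_N -> R) : Prop :=
  (forall i, 0 <= u i <= 1) /\ (forall i, ~~ ctrl i -> u i = 1).

Definition Pu (u : 'I_N -> R) : 'M[R]_N :=
  \matrix_(i, j) ((1 - u i) * P0 i j + u i * P1 i j).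
Definition hu (u : 'I_N -> R) : 'cV[R]_N :=
  \col_i ((1 - u i) * h0 i 0 + u i * h1 i 0).
Definition thu (u : 'I_N -> R) : 'cV[R]_N := \col_i (th i * u i).

(* expected total discounted value of one-period reward r under the
   Markov chain with transition matrix Q:  sum_t beta^t Q^t r
   = (I - beta Q)^{-1} r *)
Definition disc (Q : 'M[R]_N) (r : 'cV[R]_N) : 'cV[R]_N :=
  invmx (1%:M - beta *: Q) *m r.

Definition vpol (u : 'I_N -> R) : 'cV[R]_N := disc (Pu u) (hu u).
Definition bpol (u : 'I_N -> R) : 'cV[R]_N := disc (Pu u) (thu u).

Definition Sact (S : {set 'I_N}) (i : 'I_N) : R :=
  if (i \in S) || ~~ ctrl i then 1 else 0.
Definition bS (S : {set 'I_N}) : 'cV[R]_N := bpol (Sact S).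

Definition vopt (nu : R) (i : 'I_N) : R :=
  inf ((fun u => vpol u i 0 + nu * bpol u i 0) @` admissible)%classic.

(* S(nu): controllable states where the active action attains the
   minimum in the DP equation *)
Definition Sopt (nu : R) : {set 'I_N} :=
  [set j | ctrl j &
     h1 j 0 + nu * th j + beta * \sum_k P1 j k * vopt nu k
     <= h0 j 0 + beta * \sum_k P0 j k * vopt nu k].

Definition wS (S : {set 'I_N}) (i : 'I_N) : R :=
  th i * (ctrl i)%:R + beta * \sum_j (P1 i j - P0 i j) * bS S j 0.

Definition hhat0 : 'cV[R]_N :=
  h0 - (1%:M - beta *: P0) *m invmx (1%:M - beta *: P1) *m h1.

End Bandit.

Section SetSystem.
Variables (N : nat) (ctrl : pred 'I_N) (F : {set {set 'I_N}}).

Definition ctrlset : {set 'I_N} := [set j | ctrl j].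

Definition setsys_F : Prop :=
  [/\ forall S, S \in F -> S \subset ctrlset,
      set0 \in F,
      forall S, S \in F -> S != set0 -> exists2 j, j \in S & S :\ j \in F
    & forall S, S \in F -> S != ctrlset ->
        exists2 j, j \in ctrlset :\: S & j |: S \in F].

Definition inner_bd (S : {set 'I_N}) : {set 'I_N} :=
  [set j in S | S :\ j \in F].

End SetSystem.

Section Greedy.
Variables (R : realType) (N : nat) (ctrl : pred 'I_N) (F : {set {set 'I_N}}).
Variables (w : {set 'I_N} -> 'I_N -> R) (c : 'I_N -> R).

(* pi : 'I_n -> 'I_N with n = |N^{0,1}|; step k (0-based) *)
Definition Sk (n : nat) (pi : 'I_n -> 'I_N) (k : nat) : {set 'I_N} :=
  [set j | ctrl j & [forall l : 'I_n, (l < k)%N ==> (pi l != j)]].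

(* (pi, nu) is a possible output of the adaptive-greedy algorithm on
   input c, with workloads w.  y k = y^{S_{k+1}} (0-based). *)
Definition AG_run (pi : 'I_#|ctrlset ctrl| -> 'I_N) (nu : 'I_N -> R) : Prop :=
  exists y : nat -> R,
  forall k : 'I_#|ctrlset ctrl|,
    let S := Sk pi k in
    let resid j := c j - \sum_(l < #|ctrlset ctrl| | (l < k)%N)
                           y l * w (Sk pi l) j in
    [/\ pi k \in inner_bd F S,
        y k = resid (pi k) / w S (pi k),
        (forall j, j \in inner_bd F S -> y k <= resid j / w S j)
      & nu (pi k) = \sum_(l < #|ctrlset ctrl| | (l <= k)%N) y l].

End Greedy.
Arguments AG_run {R N} ctrl F w c pi nu.

From mathcomp Require Import classical_sets reals.
From mathcomp Require Import all_boot all_order all_algebra.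
From mathcomp Require Import ring lra.
Set Implicit Arguments. Unset Strict Implicit. Unset Printing Implicit Defensive.
Import Order.TTheory GRing.Theory Num.Theory.
Local Open Scope ring_scope.

(* For a set S of controllable states and a charge nu, let gap S nu j be the passive minus
   the active one-step cost at j, evaluated on the value function of the S-active policy.  It is
   affine in nu with slope -w^S_j, and equals hhat^0_j for S = N^{0,1}, nu = 0.  If the gap
   vanishes at some p in S, the active and passive equations agree at p, so deleting p from S
   changes neither the value function nor any gap.  Along the greedy run this shows that the gap
   of S_k at the charge nu_{pi_{k-1}} is the residual c_j - sum_{l<k} y^{S_l} w^{S_l}_j of the
   algorithm.  For a charge x take k with nu_{pi_{k-1}} < x <= nu_{pi_k}: the increments y^{S_l}
   being nonnegative by monotonicity of the indices, the gap of S_k at x is nonnegative on S_k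
   and negative off it, so by the comparison principle for discounted Bellman equations the
   S_k-active policy is optimal and S(x) = S_k. *)

Lemma ord_threshold n (p : pred 'I_n) :
    (forall a b : 'I_n, (a <= b)%N -> p a -> p b) ->
  exists2 k, (k <= n)%N & forall m : 'I_n, p m = (k <= m)%N.
Proof.
move=> p_up; exists (find p (enum 'I_n)).
  by rewrite -[leqRHS]size_enum_ord find_size.
move=> m; case: ltnP => [m_lt | k_le].
  by have := before_find m m_lt; rewrite nth_ord_enum.
have kn : (find p (enum 'I_n) < n)%N := leq_ltn_trans k_le (ltn_ord m).
apply: (p_up (Ordinal kn) m k_le).
have has_p : has p (enum 'I_n) by rewrite has_find size_enum_ord.
by have := nth_find (Ordinal kn) has_p; rewrite (nth_ord_enum _ (Ordinal kn)).
Qed.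

Section Sums.
Variables (R : comNzRingType) (I : finType).

Lemma sum_mulDr (a f g : I -> R) c :
  \sum_k a k * (f k + c * g k) = \sum_k a k * f k + c * \sum_k a k * g k.
Proof. rewrite mulr_sumr -big_split; apply: eq_bigr => k _ /=; ring. Qed.

Lemma sum_mulBr (a f g : I -> R) :
  \sum_k a k * (f k - g k) = \sum_k a k * f k - \sum_k a k * g k.
Proof. by rewrite -sumrB; apply: eq_bigr => k _; ring. Qed.

Lemma sum_mulBl (a b f : I -> R) :
  \sum_k (a k - b k) * f k = \sum_k a k * f k - \sum_k b k * f k.
Proof. by rewrite -sumrB; apply: eq_bigr => k _; ring. Qed.

End Sums.

Section DiscountedChain.
Variables (R : realType) (N : nat) (beta : R).
Hypotheses (beta_ge0 : 0 <= beta) (beta_lt1 : beta < 1).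

Lemma superharmonic_ge0 (Q : 'M[R]_N) (x : 'I_N -> R) : stochastic Q ->
  (forall i, beta * \sum_j Q i j * x j <= x i) -> forall i, 0 <= x i.
Proof.
move=> [Q_ge0 Q_sum1] x_super i.
have [i0 _ x_min] := @arg_minP _ _ _ i predT x isT.
apply: le_trans _ (x_min i isT).
have x_le_mean : x i0 <= \sum_j Q i0 j * x j.
  rewrite -[x i0]mul1r -(Q_sum1 i0) mulr_suml.
  by apply: ler_sum => j _; apply: ler_wpM2l; [exact: Q_ge0 | exact: x_min].
have beta_x_le : beta * x i0 <= x i0 := le_trans (ler_wpM2l beta_ge0 x_le_mean) (x_super i0).
have : 0 <= (1 - beta) * x i0 by rewrite mulrBl mul1r subr_ge0.
by rewrite pmulr_rge0 // subr_gt0.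
Qed.

Lemma resolvent_mxE (Q : 'M[R]_N) (v : 'cV[R]_N) i :
  ((1%:M - beta *: Q) *m v) i 0 = v i 0 - beta * \sum_j Q i j * v j 0.
Proof. by rewrite mulmxBl mul1mx -scalemxAl !mxE. Qed.

Lemma unitmx_resolvent (Q : 'M[R]_N) : stochastic Q -> 1%:M - beta *: Q \in unitmx.
Proof.
move=> Q_stoch; rewrite -unitmx_tr -row_free_unit; apply: inj_row_free => v.
move=> /(congr1 trmx); rewrite trmx_mul trmxK trmx0; set x := v^T => x_harmonic.
have x_fix i : beta * \sum_j Q i j * x j 0 = x i 0.
  by apply/eqP; rewrite eq_sym -subr_eq0 -resolvent_mxE x_harmonic mxE.
have x_ge0 : forall i, 0 <= x i 0.
  by apply: superharmonic_ge0 Q_stoch _ => i; rewrite x_fix.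
have x_le0 : forall i, 0 <= - x i 0.
  apply: superharmonic_ge0 Q_stoch _ => i.
  by under eq_bigr do rewrite mulrN; rewrite sumrN mulrN x_fix.
apply: trmx_inj; rewrite trmx0 -/x; apply/matrixP => i j; rewrite (ord1 j) [RHS]mxE.
by apply/eqP; rewrite eq_le x_ge0 andbT -oppr_ge0 x_le0.
Qed.

Lemma disc_fixpoint (Q : 'M[R]_N) (r : 'cV[R]_N) : stochastic Q -> forall i,
  disc beta Q r i 0 = r i 0 + beta * \sum_j Q i j * disc beta Q r j 0.
Proof.
move=> Q_stoch i.
have := congr1 (fun M : 'cV[R]_N => M i 0) (mulKVmx (unitmx_resolvent Q_stoch) r).
by rewrite /= resolvent_mxE => <-; rewrite /disc subrK.
Qed.

End DiscountedChain.

Section ChargedBandit.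
Variables (R : realType) (N : nat) (ctrl : pred 'I_N) (P0 P1 : 'M[R]_N)
  (h0 h1 : 'cV[R]_N) (beta : R) (th : 'I_N -> R).
Hypotheses (beta_ge0 : 0 <= beta) (beta_lt1 : beta < 1).
Hypotheses (P0_stoch : stochastic P0) (P1_stoch : stochastic P1).

Definition vcharge (u : 'I_N -> R) (nu : R) (i : 'I_N) : R :=
  vpol P0 P1 h0 h1 beta u i 0 + nu * bpol P0 P1 beta th u i 0.

Definition qactive (nu : R) (f : 'I_N -> R) (j : 'I_N) : R :=
  h1 j 0 + nu * th j + beta * \sum_k P1 j k * f k.

Definition qpassive (f : 'I_N -> R) (j : 'I_N) : R :=
  h0 j 0 + beta * \sum_k P0 j k * f k.

Definition bellman (u : 'I_N -> R) (nu : R) (f : 'I_N -> R) (i : 'I_N) : R :=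
  (1 - u i) * qpassive f i + u i * qactive nu f i.

Lemma sum_Pu (u f : 'I_N -> R) i :
  \sum_j Pu P0 P1 u i j * f j =
  (1 - u i) * \sum_j P0 i j * f j + u i * \sum_j P1 i j * f j.
Proof. rewrite !mulr_sumr -big_split; apply: eq_bigr => j _ /=; rewrite mxE; ring. Qed.

Lemma stochastic_Pu (u : 'I_N -> R) :
  (forall i, 0 <= u i <= 1) -> stochastic (Pu P0 P1 u).
Proof.
move: P0_stoch P1_stoch => [P0_ge0 P0_sum1] [P1_ge0 P1_sum1] u01; split.
  move=> i j; rewrite mxE; have := u01 i; have := P0_ge0 i j; have := P1_ge0 i j.
  nra.
move=> i; have mulr1_sum (Q : 'M[R]_N) : \sum_j Q i j * 1 = \sum_j Q i j.
  by apply: eq_bigr => j _; rewrite mulr1.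
by have := sum_Pu u (fun=> 1) i; rewrite !mulr1_sum P0_sum1 P1_sum1 => ->; ring.
Qed.

Lemma vcharge_fixpoint u nu : admissible ctrl u ->
  forall i, vcharge u nu i = bellman u nu (vcharge u nu) i.
Proof.
move=> [u01 _] i; have Pu_stoch := stochastic_Pu u01.
rewrite /vcharge /vpol /bpol !(disc_fixpoint beta_ge0 beta_lt1 _ Pu_stoch).
by rewrite /bellman /qactive /qpassive !sum_mulDr !sum_Pu !mxE; ring.
Qed.

Lemma bellman_sub u nu f g i :
  bellman u nu f i - bellman u nu g i = beta * \sum_j Pu P0 P1 u i j * (f j - g j).
Proof. by rewrite sum_Pu /bellman /qactive /qpassive !sum_mulBr; ring. Qed.

Lemma bellman_subsolution_le u nu (f g : 'I_N -> R) : admissible ctrl u ->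
    (forall i, f i = bellman u nu f i) -> (forall i, g i <= bellman u nu g i) ->
  forall i, g i <= f i.
Proof.
move=> [u01 _] f_fix g_sub i; rewrite -subr_ge0.
apply: (superharmonic_ge0 beta_ge0 beta_lt1 (x := fun i => f i - g i) (stochastic_Pu u01)).
move=> {}i.
by rewrite -(bellman_sub u nu) -f_fix lerD2l lerN2.
Qed.

Lemma bellman_fixpoint_unique u nu (f g : 'I_N -> R) : admissible ctrl u ->
    (forall i, f i = bellman u nu f i) -> (forall i, g i = bellman u nu g i) ->
  f =1 g.
Proof.
move=> u_adm f_fix g_fix i; apply/eqP; rewrite eq_le.
by rewrite (bellman_subsolution_le u_adm g_fix) ?(bellman_subsolution_le u_adm f_fix)
  // => j; rewrite -?f_fix -?g_fix.
Qed.

Lemma admissible_Sact (S : {set 'I_N}) : admissible ctrl (Sact R ctrl S).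
Proof.
split=> [i | i /negbTE ci]; last by rewrite /Sact ci orbT.
by rewrite /Sact; case: ifP; rewrite ?lexx ?ler01.
Qed.

Definition vS (S : {set 'I_N}) (nu : R) : 'I_N -> R := vcharge (Sact R ctrl S) nu.

Definition gap (S : {set 'I_N}) (nu : R) (j : 'I_N) : R :=
  qpassive (vS S nu) j - qactive nu (vS S nu) j.

Lemma vS_active (S : {set 'I_N}) nu j :
  (j \in S) || ~~ ctrl j -> vS S nu j = qactive nu (vS S nu) j.
Proof.
move=> act_j; rewrite /vS (vcharge_fixpoint _ (admissible_Sact S)).
by rewrite /bellman /Sact act_j subrr mul0r add0r mul1r.
Qed.

Lemma vS_passive (S : {set 'I_N}) nu j :
  ~~ ((j \in S) || ~~ ctrl j) -> vS S nu j = qpassive (vS S nu) j.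
Proof.
move=> /negbTE pas_j; rewrite /vS (vcharge_fixpoint _ (admissible_Sact S)).
by rewrite /bellman /Sact pas_j subr0 mul0r addr0 mul1r.
Qed.

Lemma gap_linear (S : {set 'I_N}) nu j :
  ctrl j -> gap S nu j = gap S 0 j - nu * wS ctrl P0 P1 beta th S j.
Proof.
move=> cj; rewrite /gap /vS /vcharge /qactive /qpassive /wS /bS cj /=.
by rewrite sum_mulBl !sum_mulDr; ring.
Qed.

Lemma gap_shift (S : {set 'I_N}) nu nu' j :
  ctrl j -> gap S nu' j = gap S nu j - (nu' - nu) * wS ctrl P0 P1 beta th S j.
Proof. by move=> cj; rewrite (gap_linear S nu' cj) (gap_linear S nu cj); ring. Qed.

Lemma gap_ctrlset0 j : gap (ctrlset ctrl) 0 j = hhat0 P0 P1 h0 h1 beta j 0.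
Proof.
have act_all i : Sact R ctrl (ctrlset ctrl) i = 1 by rewrite /Sact inE orbN.
have P_all : Pu P0 P1 (Sact R ctrl (ctrlset ctrl)) = P1.
  by apply/matrixP => a b; rewrite mxE act_all; ring.
have h_all : hu h0 h1 (Sact R ctrl (ctrlset ctrl)) = h1.
  by apply/matrixP => a b; rewrite (ord1 b) mxE act_all; ring.
have vS_all k : vS (ctrlset ctrl) 0 k = disc beta P1 h1 k 0.
  by rewrite /vS /vcharge /vpol P_all h_all mul0r addr0.
rewrite /hhat0 -mulmxA -/(disc beta P1 h1).
rewrite (_ : (h0 - _) j 0 = h0 j 0 - ((1%:M - beta *: P0) *m disc beta P1 h1) j 0);
  last by rewrite !mxE.
rewrite resolvent_mxE (disc_fixpoint beta_ge0 beta_lt1 _ P1_stoch) /gap /qpassive /qactive.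
by under eq_bigr do rewrite vS_all; under [in X in _ - X]eq_bigr do rewrite vS_all; ring.
Qed.

Lemma vS_delete (S : {set 'I_N}) p nu : ctrl p -> p \in S -> gap S nu p = 0 ->
  vS (S :\ p) nu =1 vS S nu.
Proof.
move=> cp pS gap_p0.
apply: (bellman_fixpoint_unique (admissible_Sact (S :\ p))) => i.
  exact: vcharge_fixpoint (admissible_Sact _) i.
rewrite /bellman /Sact !inE; have [->|ip] := eqVneq i p; last first.
  exact: (vcharge_fixpoint _ (admissible_Sact S)).
rewrite cp /= subr0 mul0r addr0 mul1r.
by move/subr0_eq: gap_p0 => ->; rewrite -(vS_active nu) ?pS.
Qed.

Lemma gap_delete (S : {set 'I_N}) p nu : ctrl p -> p \in S -> gap S nu p = 0 ->
  gap (S :\ p) nu =1 gap S nu.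
Proof.
move=> cp pS gap_p0 j; have vS_eq := vS_delete cp pS gap_p0.
rewrite /gap /qactive /qpassive; congr (_ + _ * _ - (_ + _ * _));
  by apply: eq_bigr => k _; rewrite vS_eq.
Qed.

Section Optimality.
Variables (S : {set 'I_N}) (nu : R).
Hypothesis gap_in : forall j, ctrl j -> j \in S -> 0 <= gap S nu j.
Hypothesis gap_out : forall j, ctrl j -> j \notin S -> gap S nu j <= 0.

Lemma vS_le_vcharge u : admissible ctrl u -> forall i, vS S nu i <= vcharge u nu i.
Proof.
move=> u_adm; apply: (bellman_subsolution_le u_adm (vcharge_fixpoint _ u_adm)) => j.
have [u01 u_unctrl] := u_adm; have /andP [uj_ge0 uj_le1] := u01 j.
rewrite /bellman; have [act_j | pas_j] := boolP ((j \in S) || ~~ ctrl j).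
  rewrite {1}(vS_active nu act_j); have [cj | ncj] := boolP (ctrl j).
    have jS : j \in S by move: act_j; rewrite cj orbF.
    by have := gap_in cj jS; rewrite /gap; nra.
  by rewrite u_unctrl // subrr mul0r add0r mul1r.
rewrite {1}(vS_passive nu pas_j); move: pas_j; rewrite negb_or negbK => /andP [jS cj].
by have := gap_out cj jS; rewrite /gap; nra.
Qed.

Lemma vopt_vS i : vopt ctrl P0 P1 h0 h1 beta th nu i = vS S nu i.
Proof.
rewrite /vopt; set E := (X in inf X).
have E_vS : E (vS S nu i) by exists (Sact R ctrl S); first exact: admissible_Sact.
have vS_lb : lbound E (vS S nu i) by move=> _ [u u_adm <-]; exact: vS_le_vcharge.
have E_ne : (E !=set0)%classic by exists (vS S nu i).
have E_lb : has_lbound E by exists (vS S nu i).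
by apply/eqP; rewrite eq_le ge_inf // lb_le_inf.
Qed.

End Optimality.

Lemma Sopt_eq (S : {set 'I_N}) nu : S \subset ctrlset ctrl ->
    (forall j, ctrl j -> (0 <= gap S nu j) = (j \in S)) ->
  Sopt ctrl P0 P1 h0 h1 beta th nu = S.
Proof.
move=> S_ctrl gap_sign.
have gap_in j : ctrl j -> j \in S -> 0 <= gap S nu j by move=> cj; rewrite gap_sign.
have gap_out j : ctrl j -> j \notin S -> gap S nu j <= 0.
  by move=> cj; rewrite -gap_sign // -ltNge => /ltW.
apply/setP => j; rewrite inE.
under eq_bigr do rewrite (vopt_vS gap_in gap_out).
under [in X in _ <= X]eq_bigr do rewrite (vopt_vS gap_in gap_out).
rewrite -subr_ge0 -[_ - _]/(gap S nu j).
have [cj | ncj] := boolP (ctrl j); first by rewrite gap_sign.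
by apply/esym/negbTE; apply: contra ncj => /(subsetP S_ctrl); rewrite inE.
Qed.

End ChargedBandit.

Lemma ctrlset_in_F N (ctrl : pred 'I_N) (F : {set {set 'I_N}}) :
  setsys_F ctrl F -> ctrlset ctrl \in F.
Proof.
case=> _ F0 _ F_aug.
have [S SF S_max] := @arg_maxnP _ set0 (mem F) (fun S => #|S|) F0.
have [<- // | S_ne] := eqVneq S (ctrlset ctrl).
have [j /setDP [_ jS] jSF] := F_aug S SF S_ne.
by have := S_max _ jSF; rewrite cardsU1 jS /= ltnn.
Qed.

Section GreedySets.
Variables (N : nat) (ctrl : pred 'I_N).
Local Notation n := #|ctrlset ctrl|.
Variable pi : 'I_n -> 'I_N.

Lemma Sk0 : Sk ctrl pi 0 = ctrlset ctrl.
Proof. by apply/setP => j; rewrite !inE; case: (ctrl j) => //=; apply/forallP. Qed.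

Lemma SkS (k : 'I_n) : Sk ctrl pi k.+1 = Sk ctrl pi k :\ pi k.
Proof.
apply/setP => j; rewrite !inE andbCA; congr (_ && _).
apply/forallP/andP => [new_j | [pik_j /forallP new_j] l].
  split; first by have := new_j k; rewrite ltnSn eq_sym.
  by apply/forallP => l; apply/implyP => lk; have := new_j l; rewrite ltnS ltnW.
rewrite ltnS leq_eqVlt; apply/implyP => /orP [/eqP/val_inj -> | lk]; first by rewrite eq_sym.
by have := new_j l; rewrite lk.
Qed.

Hypothesis pi_Sk : forall k, pi k \in Sk ctrl pi k.

Lemma ctrl_pi k : ctrl (pi k).
Proof. by have := pi_Sk k; rewrite inE => /andP []. Qed.

Lemma pi_inj : injective pi.
Proof.
have pi_neq (a b : 'I_n) : (a < b)%N -> pi a != pi b.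
  by move=> ab; have := pi_Sk b; rewrite inE => /andP [_ /forallP /(_ a)]; rewrite ab.
move=> a b pi_ab; apply/eqP; case: (ltngtP a b) => [ab | ba | /val_inj -> //].
  by have := pi_neq _ _ ab; rewrite pi_ab eqxx.
by have := pi_neq _ _ ba; rewrite pi_ab eqxx.
Qed.

Lemma mem_pi_Sk k (m : 'I_n) : (pi m \in Sk ctrl pi k) = (k <= m)%N.
Proof.
rewrite inE ctrl_pi /=; apply/forallP/idP => [new_m | km l].
  by rewrite leqNgt; apply/negP => mk; have := new_m m; rewrite mk eqxx.
by apply/implyP => lk; apply: contraTneq lk => /pi_inj ->; rewrite -leqNgt.
Qed.

Lemma pi_onto j : ctrl j -> exists m, pi m = j.
Proof.
have im_pi : [set pi m | m : 'I_n] = ctrlset ctrl.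
  apply/eqP; rewrite eqEcard card_imset; last exact: pi_inj.
  rewrite card_ord leqnn andbT; apply/subsetP => _ /imsetP [m _ ->].
  by rewrite inE ctrl_pi.
move=> cj; have : j \in [set pi m | m : 'I_n] by rewrite im_pi inE.
by case/imsetP => m _ ->; exists m.
Qed.

End GreedySets.

Section GreedyRun.
Variables (R : realType) (N : nat) (ctrl : pred 'I_N) (P0 P1 : 'M[R]_N)
  (h0 h1 : 'cV[R]_N) (beta : R) (th : 'I_N -> R).
Hypotheses (beta_ge0 : 0 <= beta) (beta_lt1 : beta < 1).
Hypotheses (P0_stoch : stochastic P0) (P1_stoch : stochastic P1).

Local Notation n := #|ctrlset ctrl|.
Variables (F : {set {set 'I_N}}) (pi : 'I_n -> 'I_N) (nu : 'I_N -> R) (y : nat -> R).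

(* Steps are numbered from 0: [S_ k] is the paper's S_{k+1}, and [nu (pi k) = Y k.+1]. *)
Local Notation S_ k := (Sk ctrl pi k).
Local Notation W k j := (wS ctrl P0 P1 beta th (S_ k) j).
Local Notation c j := (hhat0 P0 P1 h0 h1 beta j 0).
Local Notation Y k := (\sum_(i < k) y i).
Local Notation res k j := (c j%R - \sum_(i < k) y i * W i j).
Local Notation gap_ S nu j := (gap ctrl P0 P1 h0 h1 beta th S nu j).

Hypothesis F_setsys : setsys_F ctrl F.
Hypothesis wS_gt0 : forall S j, S \in F -> ctrl j -> 0 < wS ctrl P0 P1 beta th S j.
Hypothesis pi_bd : forall k : 'I_n, pi k \in inner_bd F (S_ k).
Hypothesis y_step : forall k : 'I_n,
  y k = (c (pi k) - \sum_(l < n | (l < k)%N) y l * W l (pi k)) / W k (pi k).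
Hypothesis nu_step : forall k : 'I_n, nu (pi k) = \sum_(l < n | (l <= k)%N) y l.
Hypothesis nu_mono : forall k l : 'I_n, (k <= l)%N -> nu (pi k) <= nu (pi l).

Lemma sum_ord_lt k (f : nat -> R) : (k <= n)%N ->
  \sum_(l < n | (l < k)%N) f l = \sum_(i < k) f i.
Proof. by move=> kn; rewrite (big_ord_widen n f kn). Qed.

Lemma pi_Sk k : pi k \in S_ k.
Proof. by have := pi_bd k; rewrite inE => /andP []. Qed.

Lemma Sk_F k : (k <= n)%N -> S_ k \in F.
Proof.
elim: k => [_ | k IH kn]; first by rewrite Sk0 ctrlset_in_F.
by rewrite (SkS pi (Ordinal kn)); have := pi_bd (Ordinal kn); rewrite inE => /andP [].
Qed.

Lemma W_gt0 k j : (k <= n)%N -> ctrl j -> 0 < W k j.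
Proof. by move=> kn cj; apply: wS_gt0 => //; exact: Sk_F. Qed.

Lemma nu_pi (k : 'I_n) : nu (pi k) = Y k.+1.
Proof. by rewrite nu_step (eq_bigl (fun l : 'I_n => (l < k.+1)%N)) // sum_ord_lt. Qed.

Lemma res_pi (k : 'I_n) : res k.+1 (pi k) = 0.
Proof.
have Wk_gt0 := W_gt0 (ltnW (ltn_ord k)) (ctrl_pi pi_Sk k).
rewrite big_ord_recr /= y_step (sum_ord_lt (fun l => y l * W l (pi k))) 1?ltnW //.
by rewrite divfK ?gt_eqF // subrKC subrr.
Qed.

Lemma y_ge0 i : (0 < i < n)%N -> 0 <= y i.
Proof.
case: i => // i /andP [_ iS_lt_n]; have i_lt_n := ltnW iS_lt_n.
have := nu_mono (k := Ordinal i_lt_n) (l := Ordinal iS_lt_n) (leqnSn i).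
by rewrite !nu_pi /= [in leRHS]big_ord_recr /= lerDl.
Qed.

Lemma sum_yW_ge0 a b j : (0 < a)%N -> (b <= n)%N -> ctrl j ->
  0 <= \sum_(a <= i < b) y i * W i j.
Proof.
move=> a_gt0 bn cj; rewrite big_nat_cond; apply: sumr_ge0 => i /andP [/andP [ai ib] _].
have i_lt_n := leq_trans ib bn.
by rewrite mulr_ge0 ?y_ge0 ?(leq_trans a_gt0 ai) // ltW // W_gt0 // ltnW.
Qed.

Lemma gap_Sk_Y k : (k <= n)%N -> forall j, ctrl j -> gap_ (S_ k) (Y k) j = res k j.
Proof.
elim: k => [_ j cj | k IH kn j cj]; first by rewrite Sk0 !big_ord0 subr0 gap_ctrlset0.
have gap_k i : ctrl i -> gap_ (S_ k) (Y k.+1) i = res k.+1 i.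
  move=> ci; rewrite (gap_shift P0 P1 h0 h1 beta th _ (Y k) _ ci) (IH (ltnW kn) i ci).
  have -> : Y k.+1 - Y k = y k by rewrite big_ord_recr /= addrAC subrr add0r.
  by rewrite [in RHS]big_ord_recr /= opprD addrA.
have pik_Sk : pi (Ordinal kn) \in S_ k := pi_Sk (Ordinal kn).
have gap_pik0 : gap_ (S_ k) (Y k.+1) (pi (Ordinal kn)) = 0.
  by rewrite gap_k ?(ctrl_pi pi_Sk) // res_pi.
have -> : S_ k.+1 = S_ k :\ pi (Ordinal kn) := SkS pi (Ordinal kn).
rewrite (gap_delete beta_ge0 beta_lt1 P0_stoch P1_stoch (ctrl_pi pi_Sk _) pik_Sk gap_pik0).
exact: gap_k.
Qed.

Lemma gap_Sk k x j : (k <= n)%N -> ctrl j ->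
  gap_ (S_ k) x j = res k j - (x - Y k) * W k j.
Proof.
by move=> kn cj; rewrite (gap_shift P0 P1 h0 h1 beta th _ (Y k) _ cj) (gap_Sk_Y kn cj).
Qed.

Lemma res_pi_ge (m : 'I_n) k : (k <= m)%N ->
  res k (pi m) = \sum_(k <= i < m.+1) y i * W i (pi m).
Proof.
move=> km; move: (res_pi m); rewrite -!(big_mkord xpredT (fun i => y i * W i (pi m))).
by rewrite (big_cat_nat (leq0n k) (leqW km)) /= opprD addrA => /subr0_eq.
Qed.

Lemma res_pi_lt (m : 'I_n) k : (m < k)%N ->
  res k (pi m) = - \sum_(m.+1 <= i < k) y i * W i (pi m).
Proof.
move=> mk; move: (res_pi m); rewrite -!(big_mkord xpredT (fun i => y i * W i (pi m))).
by rewrite (big_cat_nat (leq0n m.+1) mk) /= opprD addrA => ->; rewrite add0r.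
Qed.

Lemma gap_Sk_ge0 (k m : 'I_n) x : (k <= m)%N -> x <= nu (pi k) ->
  0 <= gap_ (S_ k) x (pi m).
Proof.
move=> km; rewrite nu_pi big_ord_recr /= => x_le.
have cm := ctrl_pi pi_Sk m; have kn := ltnW (ltn_ord k).
rewrite gap_Sk // res_pi_ge // big_ltn ?ltnS //.
have := sum_yW_ge0 (ltn0Sn k) (ltn_ord m) cm; have := W_gt0 kn cm.
set Wk := W k (pi m); set Yk := Y k; set rest := \sum_(_ <= _ < _) _ => Wk_gt0 rest_ge0.
have : 0 <= (Yk + y k - x) * Wk by rewrite mulr_ge0 ?subr_ge0 // ltW.
nra.
Qed.

Lemma gap_Sk_lt0 k (m : 'I_n) x : (k <= n)%N -> (m < k)%N -> Y k < x ->
  gap_ (S_ k) x (pi m) < 0.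
Proof.
move=> kn mk x_gt; have cm := ctrl_pi pi_Sk m.
rewrite gap_Sk // res_pi_lt //.
have := sum_yW_ge0 (ltn0Sn m) kn cm; have := W_gt0 kn cm.
set Wk := W k (pi m); set Yk := Y k; set rest := \sum_(_ <= _ < _) _ => Wk_gt0 rest_ge0.
have : 0 < (x - Yk) * Wk by rewrite mulr_gt0 // subr_gt0.
nra.
Qed.

Lemma Sopt_greedy x :
  Sopt ctrl P0 P1 h0 h1 beta th x = [set j | ctrl j & x <= nu j] /\
  Sopt ctrl P0 P1 h0 h1 beta th x \in F.
Proof.
have [k kn threshold] := ord_threshold (p := fun m => x <= nu (pi m))
  (fun a b ab xa => le_trans xa (nu_mono ab)).
have Sk_eq : S_ k = [set j | ctrl j & x <= nu j].
  apply/setP => j; rewrite [RHS]inE; have [cj | ncj] := boolP (ctrl j).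
    by have [m <-] := pi_onto pi_Sk cj; rewrite (mem_pi_Sk pi_Sk) threshold.
  by rewrite inE (negbTE ncj).
suff -> : Sopt ctrl P0 P1 h0 h1 beta th x = S_ k by rewrite -Sk_eq Sk_F.
apply: Sopt_eq => // [| j cj]; first by apply/subsetP => j; rewrite !inE => /andP [].
have [m <-] := pi_onto pi_Sk cj; rewrite (mem_pi_Sk pi_Sk); case: leqP => [km | mk].
  have kn' : (k < n)%N := leq_ltn_trans km (ltn_ord m).
  by rewrite (gap_Sk_ge0 (k := Ordinal kn')) // threshold /=.
have k_gt0 : (0 < k)%N := leq_ltn_trans (leq0n m) mk.
have l_lt_n : (k.-1 < n)%N by rewrite (leq_trans _ kn) // ltn_predL.
have : ~~ (x <= nu (pi (Ordinal l_lt_n))) by rewrite threshold /= -ltnNge ltn_predL.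
rewrite -ltNge nu_pi /= prednK // => Yk_lt.
by apply/negbTE; rewrite -ltNge gap_Sk_lt0.
Qed.

End GreedyRun.

Theorem theorem9 (R : realType) (N : nat) (ctrl : pred 'I_N)
    (P0 P1 : 'M[R]_N) (h0 h1 : 'cV[R]_N) (beta : R) (th : 'I_N -> R)
    (F : {set {set 'I_N}})
    (pi : 'I_#|ctrlset ctrl| -> 'I_N) (nu : 'I_N -> R) :
  0 < beta < 1 ->
  stochastic P0 -> stochastic P1 ->
  (forall i j, ~~ ctrl i -> P1 i j = P0 i j) ->
  (forall j, 0 < th j) ->
  setsys_F ctrl F ->
  (* PCL-indexability (i) *)
  (forall S j, S \in F -> ctrl j -> 0 < wS ctrl P0 P1 beta th S j) ->
  (* (pi, nu) produced by the adaptive-greedy algorithm on input hhat0 *)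
  AG_run ctrl F (wS ctrl P0 P1 beta th)
    (fun j => hhat0 P0 P1 h0 h1 beta j 0) pi nu ->
  (* PCL-indexability (ii) *)
  (forall k l : 'I_#|ctrlset ctrl|, (k <= l)%N -> nu (pi k) <= nu (pi l)) ->
  forall x : R,
    Sopt ctrl P0 P1 h0 h1 beta th x = [set j | ctrl j & x <= nu j]
    /\ Sopt ctrl P0 P1 h0 h1 beta th x \in F.
Proof.
move=> /andP [beta_gt0 beta_lt1] P0_stoch P1_stoch _ _ F_setsys wS_gt0 [y greedy] nu_mono.
apply: (Sopt_greedy (y := y) (ltW beta_gt0) beta_lt1 P0_stoch P1_stoch F_setsys wS_gt0
  _ _ _ nu_mono) => k; by case: (greedy k).
Qed.
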